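(* Let $(X,\tau)$ be a nonempty regular topological space without isolated points whose underlying set $X$ is countable. There is a coloring $c:[X]^2\to2$ such that every infinite $c$-homogeneous subset of $X$ is nowhere dense in $(X,\tau)$. Consequently the ideal $nwd(X,\tau)$ of nowhere dense subsets of $(X,\tau)$ (viewed as a family of subsets of $\mathbb{N}$ via a fixed bijection $X\cong\mathbb{N}$) has a Borel selector.
   Context: A set $h$ is $c$-homogeneous if $c$ is constant on $[h]^2$. A Borel selector for a tall family $\mathcal{C}\subseteq2^{\mathbb{N}}$ is a Borel $S:2^{\mathbb{N}}\to2^{\mathbb{N}}$ with $S(x)\subseteq x$, $S(x)\in\mathcal{C}$, and $S(x)$ infinite whenever $x$ is infinite. *)

From Stdlib Require Import Arith List.

Set Implicit Arguments.

Definition is_topology (X : Type) (open : (X -> Prop) -> Prop) : Prop :=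
  open (fun _ => True) /\
  open (fun _ => False) /\
  (forall U V, open U -> open V -> open (fun x => U x /\ V x)) /\
  (forall F : (X -> Prop) -> Prop,
      (forall U, F U -> open U) -> open (fun x => exists U, F U /\ U x)).

Definition is_closed (X : Type) (open : (X -> Prop) -> Prop) (F : X -> Prop) :=
  open (fun x => ~ F x).

Definition closure (X : Type) (open : (X -> Prop) -> Prop) (A : X -> Prop) :
  X -> Prop :=
  fun x => forall U, open U -> U x -> exists y, U y /\ A y.

Definition nowhere_dense (X : Type) (open : (X -> Prop) -> Prop) (A : X -> Prop) :=
  forall U, open U -> (forall x, U x -> closure open A x) -> forall x, ~ U x.

Definition isolated (X : Type) (open : (X -> Prop) -> Prop) (x : X) :=
  open (fun y => y = x).

Definition T1 (X : Type) (open : (X -> Prop) -> Prop) :=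
  forall x y : X, x <> y -> exists U, open U /\ U x /\ ~ U y.

Definition regular (X : Type) (open : (X -> Prop) -> Prop) :=
  T1 open /\
  forall (x : X) (F : X -> Prop), is_closed open F -> ~ F x ->
    exists U V, open U /\ open V /\ U x /\ (forall y, F y -> V y) /\
                (forall y, ~ (U y /\ V y)).

Definition countable_type (X : Type) := exists f : X -> nat, forall x y, f x = f y -> x = y.

Definition infinite_set (X : Type) (A : X -> Prop) :=
  forall l : list X, exists x, A x /\ ~ In x l.

(** A coloring c : [X]^2 -> 2 is represented by a symmetric c : X -> X -> bool
    (its values on the diagonal are irrelevant). *)
Definition symmetric_coloring (X : Type) (c : X -> X -> bool) :=
  forall x y, c x y = c y x.

Definition homogeneous (X : Type) (c : X -> X -> bool) (h : X -> Prop) :=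
  exists b : bool, forall x y, h x -> h y -> x <> y -> c x y = b.

(** Cantor space 2^N = nat -> bool (subsets of N as characteristic functions). *)
Definition cantor_open (U : (nat -> bool) -> Prop) :=
  forall x, U x -> exists n, forall y, (forall i, i < n -> y i = x i) -> U y.

Inductive borel : ((nat -> bool) -> Prop) -> Prop :=
| borel_open : forall U, cantor_open U -> borel U
| borel_compl : forall B, borel B -> borel (fun x => ~ B x)
| borel_union : forall B : nat -> ((nat -> bool) -> Prop),
    (forall n, borel (B n)) -> borel (fun x => exists n, B n x).

Definition borel_function (S : (nat -> bool) -> (nat -> bool)) :=
  forall B, borel B -> borel (fun x => B (S x)).

Definition subset_of (s t : nat -> bool) := forall n, s n = true -> t n = true.

Definition infinite_subset (s : nat -> bool) := forall m, exists n, m <= n /\ s n = true.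

Definition borel_selector (C : (nat -> bool) -> Prop) (S : (nat -> bool) -> (nat -> bool)) :=
  borel_function S /\
  forall x, subset_of (S x) x /\ C (S x) /\ (infinite_subset x -> infinite_subset (S x)).

Definition nwd_family (X : Type) (open : (X -> Prop) -> Prop) (e : X -> nat)
  (s : nat -> bool) : Prop :=
  exists A : X -> Prop, nowhere_dense open A /\ forall x, s (e x) = true <-> A x.

From Stdlib Require Import Arith List Lia Wf_nat Classical ClassicalEpsilon
  FunctionalExtensionality PropExtensionality.

(* Enumerate X injectively by f.  Regularity separates each x by disjoint open
   sets U x and O x from the finitely many points enumerated before it.  Colour a
   pair {x, y} with f x < f y by whether y lies in U x.  If h is homogeneous,
   every y in h is the only point of h in U y (colour false), or in U y ∩ O y'
   with y' the next point of h (colour true); so h is relatively discrete, and in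
   a space without isolated points such a set, finite or not, is nowhere dense.
   For the selector, transport the colouring to ℕ and run the proof of Ramsey's
   theorem inside x ⊆ ℕ: the canonical end-homogeneous sequence of x is given by
   countably many conditions on coordinates of x, and its nodes of a colour that
   occurs infinitely often form a homogeneous subset of x, infinite when x is. *)

Lemma pred_ext {A : Type} (P Q : A -> Prop) : (forall a, P a <-> Q a) -> P = Q.
Proof.
  intros H. apply functional_extensionality; intro a.
  apply propositional_extensionality, H.
Qed.

Definition bool_of (P : Prop) : bool :=
  if excluded_middle_informative P then true else false.

Lemma bool_of_true (P : Prop) : bool_of P = true <-> P.
Proof.
  unfold bool_of; destruct (excluded_middle_informative P); intuition discriminate.
Qed.

Lemma bool_of_eq (P : Prop) (b : bool) : bool_of P = b <-> (P <-> b = true).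
Proof. pose proof (bool_of_true P); destruct (bool_of P), b; intuition congruence. Qed.

Lemma ex_least_nat (P : nat -> Prop) :
  (exists n, P n) -> exists m, P m /\ forall k, P k -> m <= k.
Proof.
  intros H.
  destruct (dec_inh_nat_subset_has_unique_least_element P (fun n => classic (P n)) H)
    as (m & Hm & _).
  exists m; exact Hm.
Qed.

(** * Borel sets of the Cantor space *)

Lemma borel_ext (B B' : (nat -> bool) -> Prop) :
  borel B -> (forall x, B x <-> B' x) -> borel B'.
Proof. intros HB H. replace B' with B by (apply pred_ext, H). exact HB. Qed.

Lemma borel_const (P : Prop) : borel (fun _ => P).
Proof. apply borel_open; intros x HP; exists 0; intros _ _; exact HP. Qed.

Lemma borel_coord (n : nat) (b : bool) : borel (fun x => x n = b).
Proof.
  apply borel_open; intros x Hx; exists (S n); intros y Hy.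
  rewrite Hy by lia; exact Hx.
Qed.

Definition borel_quantifiable (A : Type) : Prop :=
  forall P : A -> (nat -> bool) -> Prop,
    (forall a, borel (P a)) -> borel (fun x => exists a, P a x).

Lemma borel_ex_nat : borel_quantifiable nat.
Proof. exact borel_union. Qed.

Lemma borel_or (B1 B2 : (nat -> bool) -> Prop) :
  borel B1 -> borel B2 -> borel (fun x => B1 x \/ B2 x).
Proof.
  intros H1 H2.
  apply borel_ext with (fun x => exists n, match n with 0 => B1 x | S _ => B2 x end).
  - apply borel_ex_nat; intros [|n]; assumption.
  - intro x; split.
    + intros [[|n] H]; auto.
    + intros [H|H]; [exists 0 | exists 1]; exact H.
Qed.

Lemma borel_and (B1 B2 : (nat -> bool) -> Prop) :
  borel B1 -> borel B2 -> borel (fun x => B1 x /\ B2 x).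
Proof.
  intros H1 H2. apply borel_ext with (fun x => ~ (~ B1 x \/ ~ B2 x)).
  - apply borel_compl, borel_or; apply borel_compl; assumption.
  - intro x; split; [intro H; split; apply NNPP; tauto | tauto].
Qed.

Lemma borel_impl (B1 B2 : (nat -> bool) -> Prop) :
  borel B1 -> borel B2 -> borel (fun x => B1 x -> B2 x).
Proof.
  intros H1 H2. apply borel_ext with (fun x => ~ B1 x \/ B2 x).
  - apply borel_or; [apply borel_compl|]; assumption.
  - intro x; split; [tauto | intro H; destruct (classic (B1 x)); tauto].
Qed.

Lemma borel_iff (B1 B2 : (nat -> bool) -> Prop) :
  borel B1 -> borel B2 -> borel (fun x => B1 x <-> B2 x).
Proof. intros H1 H2; apply borel_and; apply borel_impl; assumption. Qed.

Lemma borel_forall_nat (P : nat -> (nat -> bool) -> Prop) :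
  (forall n, borel (P n)) -> borel (fun x => forall n, P n x).
Proof.
  intros H. apply borel_ext with (fun x => ~ exists n, ~ P n x).
  - apply borel_compl, borel_ex_nat; intro n; apply borel_compl, H.
  - intro x; split.
    + intros H' n; apply NNPP; intro; apply H'; eauto.
    + intros H' [n Hn]; apply Hn, H'.
Qed.

Lemma borel_ex_bool : borel_quantifiable bool.
Proof.
  intros P HP. apply borel_ext with (fun x => P true x \/ P false x).
  - apply borel_or; apply HP.
  - intro x; split; [intros [H|H]; eauto | intros [[|] H]; auto].
Qed.

Lemma borel_ex_prod (A B : Type) :
  borel_quantifiable A -> borel_quantifiable B -> borel_quantifiable (A * B).
Proof.
  intros HA HB P HP. apply borel_ext with (fun x => exists a, exists b, P (a, b) x).
  - apply HA; intro a; apply HB; intro b; apply HP.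
  - intro x; split; [intros (a & b & H); eauto | intros [[a b] H]; eauto].
Qed.

Lemma borel_ex_list (A : Type) :
  borel_quantifiable A -> borel_quantifiable (list A).
Proof.
  intros HA.
  assert (Hlen : forall k (P : list A -> (nat -> bool) -> Prop), (forall l, borel (P l)) ->
            borel (fun x => exists l, length l = k /\ P l x)).
  { induction k as [|k IH]; intros P HP.
    - apply borel_ext with (P nil); [apply HP|].
      intro x; split; [intro H; exists nil; auto|].
      intros ([|a l] & Hl & H); [exact H | discriminate].
    - apply borel_ext with (fun x => exists a, exists l, length l = k /\ P (a :: l) x).
      + apply HA; intro a; apply IH; intro l; apply HP.
      + intro x; split.
        * intros (a & l & Hl & H); exists (a :: l); simpl; auto.
        * intros ([|a l] & Hl & H); [discriminate|]; exists a, l; auto. }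
  intros P HP. apply borel_ext with (fun x => exists k, exists l, length l = k /\ P l x).
  - apply borel_ex_nat; intro k; apply Hlen, HP.
  - intro x; split; [intros (k & l & _ & H); eauto | intros (l & H); eauto].
Qed.

Lemma nth_map_seq (y : nat -> bool) (n i : nat) :
  i < n -> nth i (map y (seq 0 n)) false = y i.
Proof.
  intros Hi.
  rewrite nth_indep with (d' := y 0) by (rewrite length_map, length_seq; exact Hi).
  rewrite map_nth, seq_nth by exact Hi; reflexivity.
Qed.

(* Preimages of open sets are unions, over finite binary words [s], of the
   (constant) condition "the cylinder of [s] lies in [U]" intersected with the
   Borel condition "[S x] lies in the cylinder of [s]". *)
Lemma borel_function_of_coords (S : (nat -> bool) -> (nat -> bool)) :
  (forall i b, borel (fun x => S x i = b)) -> borel_function S.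
Proof.
  intros HS B HB; induction HB as [U HU | B _ IH | B _ IH].
  - pose (cylinder (s : list bool) (y : nat -> bool) :=
            forall i, i < length s -> y i = nth i s false).
    apply borel_ext with (fun x => exists s, (forall y, cylinder s y -> U y) /\ cylinder s (S x)).
    + apply (borel_ex_list bool borel_ex_bool); intro s.
      apply borel_and; [apply borel_const|].
      apply borel_forall_nat; intro i; apply borel_impl; [apply borel_const | apply HS].
    + intro x; split.
      * intros (s & Hs & Hx); apply Hs, Hx.
      * intros HUx; destruct (HU _ HUx) as (n & Hn).
        exists (map (S x) (seq 0 n)); unfold cylinder; rewrite length_map, length_seq; split.
        -- intros y Hy; apply Hn; intros i Hi.
           rewrite Hy, nth_map_seq by exact Hi; reflexivity.
        -- intros i Hi; rewrite nth_map_seq by exact Hi; reflexivity.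
  - exact (borel_compl IH).
  - exact (borel_union (fun n x => B n (S x)) IH).
Qed.

(** * A Borel selector of homogeneous sets *)

Section BorelRamsey.

Variable col : nat -> nat -> bool.

Definition infinitely_many (x : nat -> bool) (P : nat -> Prop) : Prop :=
  forall k, exists n, k <= n /\ x n = true /\ P n.

Definition compatible (l : list (nat * bool)) (m : nat) : Prop :=
  Forall (fun a => fst a < m /\ col (fst a) m = snd a) l.

(* [branch x l]: read from right to left, [l] is an initial segment of the
   canonical end-homogeneous sequence of [x] built as in the proof of Ramsey's
   theorem: each node [d] is the least element of [x] compatible with the
   earlier nodes, and its colour [t] is [true] iff infinitely many compatible
   elements of [x] have colour [true] with [d]. *)
Fixpoint branch (x : nat -> bool) (l : list (nat * bool)) : Prop :=
  match l with
  | nil => True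
  | (d, t) :: l' =>
      branch x l' /\ x d = true /\ compatible l' d /\
      (forall m, m < d -> compatible l' m -> x m = false) /\
      (t = true <-> infinitely_many x (compatible ((d, true) :: l')))
  end.

Lemma branch_unique (x : nat -> bool) (l1 l2 : list (nat * bool)) :
  branch x l1 -> branch x l2 -> length l1 = length l2 -> l1 = l2.
Proof.
  revert l2; induction l1 as [|[d1 t1] l1 IH]; intros [|[d2 t2] l2]; simpl;
    try discriminate; auto.
  intros (B1 & X1 & C1 & M1 & T1) (B2 & X2 & C2 & M2 & T2) Hlen.
  assert (l1 = l2) as <- by (apply IH; auto).
  assert (d1 = d2) as <-.
  { destruct (lt_eq_lt_dec d1 d2) as [[Hlt|Heq]|Hgt]; auto.
    - rewrite (M2 d1 Hlt C1) in X1; discriminate.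
    - rewrite (M1 d2 Hgt C2) in X2; discriminate. }
  assert (t1 = t2) as <-.
  { destruct t1, t2; auto.
    - symmetry; apply T2, T1; reflexivity.
    - apply T1, T2; reflexivity. }
  reflexivity.
Qed.

Lemma branch_skipn (x : nat -> bool) (k : nat) (l : list (nat * bool)) :
  branch x l -> branch x (skipn k l).
Proof.
  revert l; induction k as [|k IH]; intros [|[d t] l]; simpl; auto.
  intros (B & _); exact (IH l B).
Qed.

Lemma branch_incl (x : nat -> bool) (l1 l2 : list (nat * bool)) :
  branch x l1 -> branch x l2 -> length l1 <= length l2 -> incl l1 l2.
Proof.
  intros B1 B2 Hlen a Ha.
  rewrite <- (firstn_skipn (length l2 - length l1) l2); apply in_or_app; right.
  replace (skipn _ l2) with l1; [exact Ha|].
  apply (branch_unique x); [exact B1 | apply branch_skipn, B2 | rewrite length_skipn; lia].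
Qed.

Definition node (x : nat -> bool) (d : nat) (t : bool) : Prop :=
  exists l, branch x ((d, t) :: l).

Lemma node_colour (x : nat -> bool) (i j : nat) (t t' : bool) :
  node x i t -> node x j t' -> i < j -> col i j = t.
Proof.
  intros [l Bi] [l' Bj] Hij.
  destruct (le_lt_dec (length ((j, t') :: l')) (length ((i, t) :: l))) as [Hle|Hlt].
  - exfalso.
    destruct (branch_incl x _ _ Bj Bi Hle (j, t') (or_introl eq_refl)) as [E|Hin].
    + injection E; lia.
    + destruct Bi as (_ & _ & Ci & _); unfold compatible in Ci; rewrite Forall_forall in Ci.
      destruct (Ci _ Hin) as [Hji _]; simpl in Hji; lia.
  - destruct Bj as (Bl' & _ & Cj & _); simpl in Hlt.
    assert (Hin : In (i, t) l')
      by (apply (branch_incl x _ _ Bi Bl'); [simpl; lia | left; reflexivity]).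
    unfold compatible in Cj; rewrite Forall_forall in Cj; exact (proj2 (Cj _ Hin)).
Qed.

Lemma branch_infinitely_many_compatible (x : nat -> bool) (l : list (nat * bool)) :
  infinite_subset x -> branch x l -> infinitely_many x (compatible l).
Proof.
  intros Hx; induction l as [|[d t] l IH]; simpl.
  - intros _ k; destruct (Hx k) as (n & Hn & Hxn).
    exists n; split; [exact Hn | split; [exact Hxn | constructor]].
  - intros (B & _ & _ & _ & Ht); destruct t; [apply Ht; reflexivity|].
    (* only finitely many candidates have colour [true] with [d] *)
    assert (Hfin : ~ infinitely_many x (compatible ((d, true) :: l)))
      by (intro H; apply Ht in H; discriminate).
    apply not_all_ex_not in Hfin as [k0 Hk0].
    intro k; destruct (IH B (max k (max k0 (S d)))) as (n & Hn & Hxn & Cn).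
    exists n; split; [lia | split; [exact Hxn|]].
    constructor; [simpl; split; [lia|] | exact Cn].
    destruct (col d n) eqn:E; [|reflexivity].
    exfalso; apply Hk0; exists n; split; [lia | split; [exact Hxn|]].
    constructor; [simpl; split; [lia | exact E] | exact Cn].
Qed.

Lemma branch_extend (x : nat -> bool) (l : list (nat * bool)) :
  branch x l -> infinitely_many x (compatible l) -> exists a, branch x (a :: l).
Proof.
  intros B Hinf; destruct (Hinf 0) as (n & _ & Hxn & Cn).
  destruct (ex_least_nat (fun m => x m = true /\ compatible l m)) as (d & (Hxd & Cd) & Hleast);
    [eauto|].
  exists (d, bool_of (infinitely_many x (compatible ((d, true) :: l)))); simpl.
  split; [exact B | split; [exact Hxd | split; [exact Cd | split]]].
  - intros m Hm Cm; destruct (x m) eqn:E; [|reflexivity].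
    specialize (Hleast m (conj E Cm)); lia.
  - apply bool_of_true.
Qed.

Lemma branch_of_length (x : nat -> bool) :
  infinite_subset x -> forall k, exists l, branch x l /\ length l = k.
Proof.
  intros Hx k; induction k as [|k (l & B & Hl)].
  - exists nil; split; [exact I | reflexivity].
  - destruct (branch_extend x l B (branch_infinitely_many_compatible x l Hx B)) as (a & Ba).
    exists (a :: l); split; [exact Ba | simpl; congruence].
Qed.

Lemma branch_length_le_head (x : nat -> bool) (d : nat) (t : bool) (l : list (nat * bool)) :
  branch x ((d, t) :: l) -> length l <= d.
Proof.
  revert d t; induction l as [|[d' t'] l IH]; intros d t B; simpl; [lia|].
  destruct B as (B & _ & C & _); apply Forall_cons_iff in C as [[Hd' _] _].
  specialize (IH d' t' B); simpl in Hd'; lia.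
Qed.

Definition many_false_nodes (x : nat -> bool) : Prop :=
  forall m, exists d, m <= d /\ node x d false.

(* The nodes of a colour occurring infinitely often along the branch,
   [false] when both do. *)
Definition selected (x : nat -> bool) (i : nat) : Prop :=
  exists t, node x i t /\ (t = false <-> many_false_nodes x).

Lemma selected_in (x : nat -> bool) (i : nat) : selected x i -> x i = true.
Proof. intros (t & (l & B) & _); exact (proj1 (proj2 B)). Qed.

Lemma selected_homogeneous (x : nat -> bool) :
  exists b, forall m n, selected x m -> selected x n -> m < n -> col m n = b.
Proof.
  destruct (classic (many_false_nodes x)) as [Hmany|Hfew]; [exists false | exists true];
    intros m n (t & Nm & Ht) (t' & Nn & _) Hmn; rewrite (node_colour x m n t t' Nm Nn Hmn).
  - apply Ht, Hmany.
  - destruct t; [reflexivity|]; exfalso; apply Hfew, Ht; reflexivity.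
Qed.

Lemma selected_unbounded (x : nat -> bool) :
  infinite_subset x -> forall m, exists n, m <= n /\ selected x n.
Proof.
  intros Hx m; destruct (classic (many_false_nodes x)) as [Hmany|Hfew].
  - destruct (Hmany m) as (d & Hd & Nd).
    exists d; split; [exact Hd|]; exists false; split; [exact Nd | tauto].
  - (* beyond the last [false] node all nodes are [true] *)
    apply not_all_ex_not in Hfew as [m0 Hm0].
    destruct (branch_of_length x Hx (S (max m m0))) as ([|[d t] l] & B & Hlen);
      [discriminate|].
    pose proof (branch_length_le_head x d t l B) as Hd; simpl in Hlen.
    exists d; split; [lia|]; exists t; split; [exists l; exact B|].
    destruct t; [split; [discriminate | intro Hmany; contradiction (Hm0 (Hmany m0))]|].
    exfalso; apply Hm0; exists d; split; [lia | exists l; exact B].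
Qed.

Lemma infinitely_many_borel (P : nat -> Prop) : borel (fun x => infinitely_many x P).
Proof.
  apply borel_forall_nat; intro k; apply borel_ex_nat; intro n.
  apply borel_and; [apply borel_const | apply borel_and; [apply borel_coord | apply borel_const]].
Qed.

Lemma branch_borel (l : list (nat * bool)) : borel (fun x => branch x l).
Proof.
  induction l as [|[d t] l IH]; simpl; [apply borel_const|].
  apply borel_and; [exact IH|]; apply borel_and; [apply borel_coord|].
  apply borel_and; [apply borel_const|]; apply borel_and.
  - apply borel_forall_nat; intro m; apply borel_impl; [apply borel_const|].
    apply borel_impl; [apply borel_const | apply borel_coord].
  - apply borel_iff; [apply borel_const | apply infinitely_many_borel].
Qed.

Lemma node_borel (d : nat) (t : bool) : borel (fun x => node x d t).
Proof.
  apply (borel_ex_list _ (borel_ex_prod _ _ borel_ex_nat borel_ex_bool)); intro l.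
  apply branch_borel.
Qed.

Lemma selected_borel (i : nat) : borel (fun x => selected x i).
Proof.
  apply borel_ex_bool; intro t; apply borel_and; [apply node_borel|].
  apply borel_iff; [apply borel_const|].
  apply borel_forall_nat; intro m; apply borel_ex_nat; intro d.
  apply borel_and; [apply borel_const | apply node_borel].
Qed.

Theorem borel_homogeneous_selector :
  exists S : (nat -> bool) -> (nat -> bool),
    borel_function S /\
    forall x, subset_of (S x) x /\ (infinite_subset x -> infinite_subset (S x)) /\
      exists b, forall m n, S x m = true -> S x n = true -> m < n -> col m n = b.
Proof.
  exists (fun x i => bool_of (selected x i)); split.
  - apply borel_function_of_coords; intros i b.
    apply borel_ext with (fun x => selected x i <-> b = true).
    + apply borel_iff; [apply selected_borel | apply borel_const].
    + intro x; rewrite bool_of_eq; reflexivity.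
  - intro x; split; [|split].
    + intros i Hi; apply selected_in, bool_of_true, Hi.
    + intros Hx m; destruct (selected_unbounded x Hx m) as (n & Hn & Sn).
      exists n; split; [exact Hn | apply bool_of_true, Sn].
    + destruct (selected_homogeneous x) as [b Hb]; exists b.
      intros m n Hm Hn; apply Hb; apply bool_of_true; assumption.
Qed.

End BorelRamsey.

(** * Nowhere dense homogeneous sets *)

Section RegularSpace.

Variables (X : Type) (open : (X -> Prop) -> Prop).
Hypothesis open_topology : is_topology open.

Lemma open_and (U V : X -> Prop) : open U -> open V -> open (fun x => U x /\ V x).
Proof. destruct open_topology as (_ & _ & Hand & _); apply Hand. Qed.

Lemma open_neq (z : X) : T1 open -> open (fun y => y <> z).
Proof.
  intros HT1; destruct open_topology as (_ & _ & _ & Hunion).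
  replace (fun y => y <> z) with (fun y => exists U, (open U /\ ~ U z) /\ U y).
  - apply Hunion; intros U [HU _]; exact HU.
  - apply pred_ext; intro y; split.
    + intros (U & (_ & HUz) & HUy) ->; contradiction.
    + intro Hyz; destruct (HT1 y z Hyz) as (U & HU & HUy & HUz); exists U; auto.
Qed.

Lemma open_index_ge (f : X -> nat) :
  T1 open -> (forall x y, f x = f y -> x = y) -> forall N, open (fun y => N <= f y).
Proof.
  intros HT1 Hf N; induction N as [|N IH].
  - replace (fun y => 0 <= f y) with (fun _ : X => True)
      by (apply pred_ext; intro; split; [lia | trivial]).
    apply open_topology.
  - destruct (classic (exists z, f z = N)) as [[z Hz]|Hnone].
    + replace (fun y => S N <= f y) with (fun y => N <= f y /\ y <> z).
      * apply open_and; [exact IH | apply open_neq, HT1].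
      * apply pred_ext; intro y; split.
        -- intros [Hy Hyz]; assert (f y <> N) by (intro E; apply Hyz, Hf; congruence); lia.
        -- intro Hy; split; [lia | intros ->; lia].
    + replace (fun y => S N <= f y) with (fun y => N <= f y); [exact IH|].
      apply pred_ext; intro y; split; [|lia].
      intro Hy; assert (f y <> N) by (intro E; apply Hnone; eauto); lia.
Qed.

(* Each point is separated by [U x] and [O x] from the finitely many points
   enumerated before it; these finite sets are closed in a T1 space. *)
Lemma separating_neighbourhoods (f : X -> nat) :
  regular open -> (forall x y, f x = f y -> x = y) ->
  exists U O : X -> X -> Prop,
    (forall x, open (U x)) /\ (forall x, open (O x)) /\ (forall x, U x x) /\
    (forall x y, f y < f x -> O x y) /\ (forall x y, ~ (U x y /\ O x y)).
Proof.
  intros [HT1 Hsep] Hf.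
  destruct (choice (fun x (p : (X -> Prop) * (X -> Prop)) =>
      open (fst p) /\ open (snd p) /\ fst p x /\
      (forall y, f y < f x -> snd p y) /\ (forall y, ~ (fst p y /\ snd p y))))
    as [g Hg].
  - intro x; destruct (Hsep x (fun y => f y < f x)) as (U & V & HU & HV & HUx & HV' & HUV).
    + unfold is_closed.
      replace (fun y => ~ f y < f x) with (fun y => f x <= f y)
        by (apply pred_ext; intro; lia).
      apply open_index_ge; assumption.
    + lia.
    + exists (U, V); simpl; auto.
  - exists (fun x => fst (g x)), (fun x => snd (g x)).
    repeat split; intros; apply Hg; assumption.
Qed.

Definition relatively_discrete (h : X -> Prop) : Prop :=
  forall y, h y -> exists W, open W /\ W y /\ forall z, W z -> h z -> z = y.

(* A point of [h] in the interior of the closure of [h] would be isolated,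
   since it is the only point of [h] in some open set. *)
Lemma relatively_discrete_nowhere_dense (h : X -> Prop) :
  T1 open -> (forall x, ~ isolated open x) -> relatively_discrete h ->
  nowhere_dense open h.
Proof.
  intros HT1 Hnoiso Hdisc U HU Hcl x Hx.
  destruct (Hcl x Hx U HU Hx) as (y & HUy & Hy).
  destruct (Hdisc y Hy) as (W & HW & HWy & HWh).
  apply (Hnoiso y); unfold isolated.
  replace (fun z => z = y) with (fun z => W z /\ U z); [apply open_and; assumption|].
  apply pred_ext; intro z; split; [|intros ->; auto].
  intros [HWz HUz]; apply NNPP; intro Hzy.
  assert (HG : open (fun w => (W w /\ U w) /\ w <> y))
    by (apply open_and; [apply open_and | apply open_neq]; assumption).
  destruct (Hcl z HUz _ HG (conj (conj HWz HUz) Hzy)) as (w & ((HWw & _) & Hwy) & Hw).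
  exact (Hwy (HWh w HWw Hw)).
Qed.

Section OrderColoring.

Variables (f : X -> nat) (U O : X -> X -> Prop).
Hypotheses (f_inj : forall x y, f x = f y -> x = y)
  (U_open : forall x, open (U x)) (O_open : forall x, open (O x))
  (U_refl : forall x, U x x) (O_lower : forall x y, f y < f x -> O x y)
  (U_O_disjoint : forall x y, ~ (U x y /\ O x y)).

Definition order_coloring (x y : X) : bool :=
  if f x <? f y then bool_of (U x y) else bool_of (U y x).

Lemma order_coloring_sym : symmetric_coloring order_coloring.
Proof.
  intros x y; unfold order_coloring.
  destruct (Nat.ltb_spec (f x) (f y)), (Nat.ltb_spec (f y) (f x)); try lia; try reflexivity.
  assert (x = y) as -> by (apply f_inj; lia); reflexivity.
Qed.

Lemma order_coloring_true (x y : X) : f x < f y -> order_coloring x y = true <-> U x y.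
Proof.
  intros Hxy; unfold order_coloring.
  destruct (Nat.ltb_spec (f x) (f y)); [apply bool_of_true | lia].
Qed.

Lemma U_index_ge (x y : X) : U x y -> f x <= f y.
Proof.
  intros HUxy; destruct (le_lt_dec (f x) (f y)) as [|Hlt]; [assumption|].
  exfalso; exact (U_O_disjoint x y (conj HUxy (O_lower x y Hlt))).
Qed.

Lemma homogeneous_relatively_discrete (h : X -> Prop) :
  homogeneous order_coloring h -> relatively_discrete h.
Proof.
  intros [b Hb] y Hy.
  destruct b; [destruct (classic (exists z, h z /\ f y < f z)) as [Hnext|Hlast]|].
  - (* cut [U y] down by [O y'] for the next point [y'] of [h] *)
    destruct (ex_least_nat (fun n => exists z, h z /\ f y < f z /\ f z = n))
      as (n & (y' & Hy' & Hyy' & <-) & Hleast);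
      [destruct Hnext as (z & Hz & Hyz); eauto|].
    exists (fun w => U y w /\ O y' w); split; [apply open_and; auto|].
    split; [split; auto|].
    intros z [HUz HOz] Hz; destruct (Nat.eq_dec (f z) (f y)) as [E|Hne]; [apply f_inj, E|].
    pose proof (U_index_ge y z HUz) as Hyz.
    assert (Hy'z : f y' <= f z) by (apply Hleast; exists z; repeat split; auto; lia).
    exfalso; destruct (Nat.eq_dec (f z) (f y')) as [E|Hne'].
    + apply f_inj in E; subst z; exact (U_O_disjoint y' y' (conj (U_refl y') HOz)).
    + apply (U_O_disjoint y' z); split; [|exact HOz].
      apply order_coloring_true; [lia|]; apply Hb; [assumption | assumption | intros ->; lia].
  - exists (U y); split; [auto | split; [auto|]].
    intros z HUz Hz; pose proof (U_index_ge y z HUz) as Hyz.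
    destruct (Nat.eq_dec (f y) (f z)) as [E|Hne]; [symmetry; apply f_inj, E|].
    exfalso; apply Hlast; exists z; split; [assumption | lia].
  - exists (U y); split; [auto | split; [auto|]].
    intros z HUz Hz; pose proof (U_index_ge y z HUz) as Hyz.
    destruct (Nat.eq_dec (f y) (f z)) as [E|Hne]; [symmetry; apply f_inj, E|].
    assert (Hc : order_coloring y z = true) by (apply order_coloring_true; [lia | exact HUz]).
    rewrite Hb in Hc by (assumption || (intros ->; lia)); discriminate.
Qed.

End OrderColoring.

Theorem homogeneous_nowhere_dense_coloring (f : X -> nat) :
  regular open -> (forall x, ~ isolated open x) -> (forall x y, f x = f y -> x = y) ->
  exists c : X -> X -> bool,
    symmetric_coloring c /\ forall h, homogeneous c h -> nowhere_dense open h.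
Proof.
  intros Hreg Hnoiso Hf.
  destruct (separating_neighbourhoods f Hreg Hf) as (U & O & HU & HO & HUx & HOx & HUO).
  exists (order_coloring f U); split; [apply (order_coloring_sym f U Hf)|].
  intros h Hh; apply relatively_discrete_nowhere_dense; [apply Hreg | exact Hnoiso|].
  exact (homogeneous_relatively_discrete f U O Hf HU HO HUx HOx HUO h Hh).
Qed.

End RegularSpace.

Theorem mainTheorem18 (X : Type) (open : (X -> Prop) -> Prop) :
  is_topology open ->
  (exists x0 : X, True) ->
  regular open ->
  (forall x : X, ~ isolated open x) ->
  countable_type X ->
  (exists c : X -> X -> bool,
      symmetric_coloring c /\
      forall h : X -> Prop, infinite_set h -> homogeneous c h -> nowhere_dense open h)
  /\
  (forall e : X -> nat,
      (forall x y, e x = e y -> x = y) -> (forall n, exists x, e x = n) ->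
      exists S, borel_selector (nwd_family open e) S).
Proof.
  intros Htop _ Hreg Hnoiso [f Hf]; split.
  - destruct (homogeneous_nowhere_dense_coloring X open Htop f Hreg Hnoiso Hf)
      as (c & Hsym & Hnwd).
    exists c; split; [exact Hsym | intros h _; apply Hnwd].
  - intros e He Hsurj.
    destruct (homogeneous_nowhere_dense_coloring X open Htop e Hreg Hnoiso He)
      as (c & Hsym & Hnwd).
    destruct (choice (fun n y => e y = n) Hsurj) as [e_inv He_inv].
    assert (Hinv : forall y, e_inv (e y) = y) by (intro y; apply He, He_inv).
    destruct (borel_homogeneous_selector (fun m n => c (e_inv m) (e_inv n)))
      as (S & HS & Hsel).
    exists S; split; [exact HS|]; intro x.
    destruct (Hsel x) as (Hsub & Hinf & b & Hhom).
    split; [exact Hsub | split; [|exact Hinf]].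
    exists (fun y => S x (e y) = true); split; [|reflexivity].
    apply Hnwd; exists b; intros y z Hy Hz Hyz.
    destruct (lt_eq_lt_dec (e y) (e z)) as [[Hlt|Heq]|Hgt].
    + rewrite <- (Hinv y), <- (Hinv z); exact (Hhom _ _ Hy Hz Hlt).
    + contradiction (Hyz (He y z Heq)).
    + rewrite Hsym, <- (Hinv y), <- (Hinv z); exact (Hhom _ _ Hz Hy Hgt).
Qed.
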